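(* Let $\ell\geq k$ be positive integers, let $\lambda\in\mathcal{P}_{\rm sq}^k$ and let $\mu\in\mathcal{P}^\ell$. Then $\mu\in\mathcal{P}^\ell(\lambda)$ if and only if there exists $b\in[\ell-k+1]$ such that: (i) $\mu(b)=b+k-1$ and $\mu(b+k-1)=b$; (ii) if $1\leq i<b$ then $\mu(\mu(i))>i$; (iii) if $b+k-1<i\leq \ell$ then $\mu(\mu(i))<i$; (iv) if $\tilde\lambda\in\mathcal{P}_{\rm sq}^k$ is defined by $\tilde\lambda(i)=\mu(b+i-1)-b+1$ for $1\leq i\leq k$, then $\tilde\lambda\in\{\lambda,\tau_k(\lambda)\}$.
   Context: For a positive integer $n$, $[n]=\{1,\dots,n\}$. A partition with $n$ parts is a sequence $\lambda=(\lambda_1,\dots,\lambda_n)$ of positive integers with $\lambda_1\geq\dots\geq\lambda_n>0$. For $n,k\in\mathbb{Z}^+$, $\mathcal{P}^{n,k}$ is the set of partitions with exactly $n$ parts and $\lambda_1\leq k$; such $\lambda$ is regarded as a weakly decreasing function $[n]\to[k]$, $\lambda(i)=\lambda_i$. Set $\mathcal{P}^k=\mathcal{P}^{k,k}$ (so elements of $\mathcal{P}^k$ are decreasing maps $[k]\to[k]$ and can be composed with themselves). The map $\tau_k:\mathcal{P}^{n,k}\to\mathcal{P}^{n,k}$ is $\tau_k(\lambda_1,\dots,\lambda_n)=(k+1-\lambda_n,\dots,k+1-\lambda_1)$. Let $\mathcal{P}_{\rm sq}^k=\{\lambda\in\mathcal{P}^k:\lambda_1=k,\ \lambda_k=1\}$.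 For $\lambda\in\mathcal{P}^k$ and $\ell\geq k$, define subsets $\mathcal{P}^\ell(\lambda)\subseteq\mathcal{P}^\ell$ inductively: $\mathcal{P}^k(\lambda)=\{\lambda,\tau_k(\lambda)\}$, and for $\ell>k$, $\mathcal{P}^\ell(\lambda)=\mathcal{P}^\ell_{\rm d}(\lambda)\cup\tau_\ell(\mathcal{P}^\ell_{\rm d}(\lambda))$ where $\mathcal{P}^\ell_{\rm d}(\lambda)=\{\mu\in\mathcal{P}^\ell:(\mu_1,\dots,\mu_{\ell-1})\in\mathcal{P}^{\ell-1}(\lambda)\}$. *)

From mathcomp Require Import all_boot.
Set Implicit Arguments. Unset Strict Implicit. Unset Printing Implicit Defensive.

(* A partition with n parts and largest part <= k, i.e. an element of P^{n,k},
   is represented as the sequence [:: lam_1; ...; lam_n] of nats. *)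
Definition is_part (n k : nat) (l : seq nat) : bool :=
  [&& size l == n, sorted geq l & all (fun x => 0 < x <= k) l].

(* 1-indexed evaluation: ev l i = lam(i) = lam_i for 1 <= i <= size l. *)
Definition ev (l : seq nat) (i : nat) : nat := nth 0 l i.-1.

Definition tau (k : nat) (l : seq nat) : seq nat := rev (map (fun x => k.+1 - x) l).

Definition P_sq (k : nat) (l : seq nat) : bool :=
  [&& is_part k k l, ev l 1 == k & ev l k == 1].

(* Pset k lam d = P^{k+d}(lam), defined by the paper's induction on ell = k + d. *)
Fixpoint Pset (k : nat) (lam : seq nat) (d : nat) : seq nat -> Prop :=
  match d with
  | 0 => fun mu => mu = lam \/ mu = tau k lam
  | d'.+1 =>
      let Pd := fun nu => is_part (k + d) (k + d) nu /\ Pset k lam d' (take (k + d') nu) in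
      fun mu => Pd mu \/ exists nu, Pd nu /\ mu = tau (k + d) nu
  end.

Definition Pell (k : nat) (lam : seq nat) (ell : nat) (mu : seq nat) : Prop :=
  k <= ell /\ Pset k lam (ell - k) mu.

From mathcomp Require Import all_boot zify.
Set Implicit Arguments. Unset Strict Implicit.

(* Both operations used to build P^ell(lam) preserve the
   characterisation: truncation of the last part keeps the same b (the square
   block and the conditions on mu o mu below ell are untouched, and the new
   condition at i = ell follows from mu_1 < ell), while tau_ell sends b to
   ell + 2 - k - b and swaps (ii) with (iii).  Conversely, if mu satisfies the
   conditions then either mu_1 < ell, so mu extends its truncation, or
   mu_1 = ell; then b > 1 and (ii) at i = 1 gives mu_ell > 1, so tau_ell mu has
   first part < ell and mu = tau_ell (tau_ell mu) is a reflected extension. *)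

Lemma is_partP n k l : is_part n k l <->
  [/\ size l = n, (forall i j, 1 <= i <= j -> j <= n -> ev l j <= ev l i) &
      (forall i, 1 <= i <= n -> 0 < ev l i <= k)].
Proof.
rewrite /is_part /ev; split.
- case/and3P=> /eqP size_l sorted_l /(all_nthP 0) bounded_l; split => //.
  + move=> i j /andP[i_gt0 le_ij] le_jn.
    apply: (@sorted_leq_nth _ geq _ _ 0 l sorted_l i.-1 j.-1);
      rewrite ?inE ?size_l; try lia.
    * by move=> ? ? ? /=; lia.
    * by move=> ? /=.
  + by move=> i /andP[i_gt0 le_in]; apply: bounded_l; lia.
- case=> size_l mono_l bounded_l; apply/and3P; split; first exact/eqP.
  + by apply/(sortedP 0) => i lt_i; apply: (mono_l i.+1 i.+2); lia.
  + by apply/(all_nthP 0) => i lt_i; apply: (bounded_l i.+1); lia.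
Qed.

Lemma size_tau k l : size (tau k l) = size l.
Proof. by rewrite /tau size_rev size_map. Qed.

Lemma nth_tau k l j : j < size l -> nth 0 (tau k l) j = k.+1 - nth 0 l (size l - j.+1).
Proof. by move=> lt_j; rewrite /tau nth_rev size_map // (nth_map 0) //; lia. Qed.

Lemma ev_tau n k l i : size l = n -> 1 <= i <= n ->
  ev (tau k l) i = k.+1 - ev l (n.+1 - i).
Proof. by move=> size_l lt_i; rewrite /ev nth_tau size_l; do 2?f_equal; lia. Qed.

Lemma is_part_tau n k l : is_part n k l -> is_part n k (tau k l).
Proof.
case/is_partP=> size_l mono_l bounded_l; apply/is_partP; split.
- by rewrite size_tau.
- move=> i j le_ij le_jn; rewrite !(ev_tau k size_l); try lia.
  have := mono_l (n.+1 - j) (n.+1 - i).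
  have := bounded_l (n.+1 - j); have := bounded_l (n.+1 - i); lia.
- by move=> i lt_i; rewrite (ev_tau k size_l) //; have := bounded_l (n.+1 - i); lia.
Qed.

Lemma tauK n k l : is_part n k l -> tau k (tau k l) = l.
Proof.
case/is_partP=> size_l _ bounded_l.
apply: (eq_from_nth (x0 := 0)); first by rewrite !size_tau.
move=> i; rewrite !size_tau => lt_i.
rewrite nth_tau ?size_tau // nth_tau ?size_tau; last lia.
have -> : size l - (size l - i.+1).+1 = i by lia.
by have := bounded_l i.+1; rewrite /ev /=; lia.
Qed.

Lemma ev_take m l i : 1 <= i <= m -> ev (take m l) i = ev l i.
Proof. by move=> lt_i; rewrite /ev nth_take //; lia. Qed.

Lemma is_part_take n l : is_part n.+1 n.+1 l -> ev l 1 <= n -> is_part n n (take n l).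
Proof.
case/is_partP=> size_l mono_l bounded_l first_le; apply/is_partP; split.
- by rewrite size_takel // size_l.
- by move=> i j le_ij le_jn; rewrite !ev_take; try lia; apply: mono_l; lia.
- by move=> i lt_i; rewrite ev_take //; have := bounded_l i; have := mono_l 1 i; lia.
Qed.

Lemma mkseq_ev n l : is_part n n l -> mkseq (fun j => ev l (1 + j) - 1 + 1) n = l.
Proof.
case/is_partP=> size_l _ bounded_l.
apply: (eq_from_nth (x0 := 0)); first by rewrite size_mkseq.
rewrite size_mkseq => j lt_j; rewrite nth_mkseq //.
by have := bounded_l (1 + j); rewrite /ev add1n /=; lia.
Qed.

Lemma Pset_is_part k lam d mu :
  is_part k k lam -> Pset k lam d mu -> is_part (k + d) (k + d) mu.
Proof.
move=> lam_part; case: d => [|d] /=.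
- by rewrite addn0; case=> ->; [|apply: is_part_tau].
- by case=> [[]|[nu [[nu_part _] ->]]] //; apply: is_part_tau.
Qed.

Definition square_block k ell (lam mu : seq nat) b :=
  [/\ 1 <= b <= ell - k + 1,
      ev mu b = b + k - 1 /\ ev mu (b + k - 1) = b,
      (forall i, 1 <= i < b -> ev mu (ev mu i) > i),
      (forall i, b + k - 1 < i <= ell -> ev mu (ev mu i) < i) &
      (let lt := mkseq (fun j => ev mu (b + j) - b + 1) k in
       lt = lam \/ lt = tau k lam)].

Definition has_square_block k ell lam mu := exists b, square_block k ell lam mu b.

Section SquareBlock.

Variables (k : nat) (lam : seq nat).
Hypothesis k_gt0 : 0 < k.

Lemma square_block_tau ell mu b :
  k <= ell -> is_part k k lam -> is_part ell ell mu -> square_block k ell lam mu b ->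
  square_block k ell lam (tau ell mu) (ell.+2 - k - b).
Proof.
move=> le_k_ell lam_part mu_part [b_range [mu_b mu_bk] below above block].
have [size_mu mono_mu bounded_mu] := proj1 (is_partP _ _ _) mu_part.
have evT i : 1 <= i <= ell -> ev (tau ell mu) i = ell.+1 - ev mu (ell.+1 - i).
  exact: ev_tau.
have evTT i : 1 <= i <= ell ->
    ev (tau ell mu) (ev (tau ell mu) i) = ell.+1 - ev mu (ev mu (ell.+1 - i)).
  move=> lt_i; have := bounded_mu (ell.+1 - i) ltac:(lia) => ?.
  by rewrite evT // evT; try lia; congr (_ - ev mu _); lia.
have block_tau : mkseq (fun j => ev (tau ell mu) (ell.+2 - k - b + j) - (ell.+2 - k - b) + 1) k
                 = tau k (mkseq (fun j => ev mu (b + j) - b + 1) k).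
  apply: (eq_from_nth (x0 := 0)); first by rewrite size_tau !size_mkseq.
  rewrite size_mkseq => j lt_j.
  rewrite nth_tau ?size_mkseq // nth_mkseq // nth_mkseq; last lia.
  rewrite evT; last lia.
  have -> : ell.+1 - (ell.+2 - k - b + j) = b + (k - j.+1) by lia.
  have := mono_mu (b + (k - j.+1)) (b + k - 1) ltac:(lia) ltac:(lia).
  have := mono_mu b (b + (k - j.+1)) ltac:(lia) ltac:(lia).
  have := bounded_mu (b + (k - j.+1)) ltac:(lia); lia.
split.
- lia.
- rewrite !evT; try lia.
  have -> : ell.+1 - (ell.+2 - k - b) = b + k - 1 by lia.
  have -> : ell.+1 - (ell.+2 - k - b + k - 1) = b by lia.
  by rewrite mu_b mu_bk; lia.
- by move=> i lt_i; rewrite evTT; last lia; have := above (ell.+1 - i); lia.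
- move=> i lt_i; rewrite evTT; last lia.
  have mu_i := bounded_mu (ell.+1 - i) ltac:(lia).
  have := below (ell.+1 - i) ltac:(lia).
  have := bounded_mu (ev mu (ell.+1 - i)) ltac:(lia); lia.
- move: block => /=; rewrite block_tau.
  by case=> ->; [right | left; rewrite (tauK lam_part)].
Qed.

Lemma has_square_block_tau ell mu :
  k <= ell -> is_part k k lam -> is_part ell ell mu ->
  has_square_block k ell lam mu -> has_square_block k ell lam (tau ell mu).
Proof.
move=> le_k_ell lam_part mu_part [b block].
by exists (ell.+2 - k - b); apply: square_block_tau. Qed.

Lemma mkseq_ev_take m mu b :
  0 < b -> b + k - 1 <= m ->
  mkseq (fun j => ev (take m mu) (b + j) - b + 1) k = mkseq (fun j => ev mu (b + j) - b + 1) k.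
Proof.
move=> b_gt0 le_bk_m; apply: (eq_from_nth (x0 := 0)); first by rewrite !size_mkseq.
by rewrite size_mkseq => j lt_j; rewrite !nth_mkseq // ev_take //; lia.
Qed.

Lemma square_block_take m mu b :
  k <= m -> is_part m.+1 m.+1 mu -> ev mu 1 <= m ->
  square_block k m.+1 lam mu b -> square_block k m lam (take m mu) b.
Proof.
move=> le_k_m mu_part first_le [b_range [mu_b mu_bk] below above block].
have [size_mu mono_mu bounded_mu] := proj1 (is_partP _ _ _) mu_part.
have le_bk_m : b + k - 1 <= m by have := mono_mu 1 b; lia.
have evTT i : 1 <= i <= m -> ev (take m mu) (ev (take m mu) i) = ev mu (ev mu i).
  move=> lt_i; have := bounded_mu i; have := mono_mu 1 i.
  by rewrite (ev_take _ (i := i)) // => ??; rewrite ev_take //; lia.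
split.
- lia.
- by rewrite !ev_take; lia.
- by move=> i lt_i; rewrite evTT; last lia; apply: below.
- by move=> i lt_i; rewrite evTT; last lia; apply: above; lia.
- by rewrite /= mkseq_ev_take //; lia.
Qed.

Lemma square_block_extend m mu b :
  k <= m -> is_part m.+1 m.+1 mu -> is_part m m (take m mu) ->
  square_block k m lam (take m mu) b -> square_block k m.+1 lam mu b.
Proof.
move=> le_k_m mu_part take_part [b_range [mu_b mu_bk] below above block].
have [size_mu mono_mu bounded_mu] := proj1 (is_partP _ _ _) mu_part.
have [_ _ bounded_take] := proj1 (is_partP _ _ _) take_part.
rewrite !ev_take in mu_b mu_bk; try lia.
have first_le : ev mu 1 <= m by have := bounded_take 1; rewrite ev_take; lia.
have evTT i : 1 <= i <= m -> ev (take m mu) (ev (take m mu) i) = ev mu (ev mu i).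
  move=> lt_i; have := bounded_take i lt_i.
  by rewrite (ev_take _ (i := i)) // => ?; rewrite ev_take //; lia.
split.
- lia.
- lia.
- by move=> i lt_i; rewrite -evTT; last lia; apply: below.
- move=> i lt_i; have [le_im | ->] : i <= m \/ i = m.+1 by lia.
  + by rewrite -evTT; last lia; apply: above; lia.
  + have := bounded_mu m.+1; have := mono_mu 1 (ev mu m.+1); lia.
- by rewrite /= -(mkseq_ev_take (m := m)) //; lia.
Qed.

Lemma square_block_last_gt1 m mu b :
  k <= m -> ev mu 1 = m.+1 -> square_block k m.+1 lam mu b ->
  1 < ev mu m.+1.
Proof.
move=> le_k_m first_eq [b_range [mu_b _] below _ _].
have b_neq1 : b != 1 by apply/eqP => b1; move: mu_b; rewrite b1 first_eq; lia.
by have := below 1; rewrite first_eq; lia.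
Qed.

Hypothesis lam_sq : P_sq k lam.

Let lam_part : is_part k k lam. Proof. by case/and3P: lam_sq. Qed.

Lemma Pset0_iff mu : is_part k k mu ->
  (Pset k lam 0 mu <-> has_square_block k k lam mu).
Proof.
move=> mu_part; split => [|[b [b_range _ _ _ block]]]; last first.
  have b1 : b = 1 by lia.
  by move: block; rewrite b1 /= mkseq_ev.
have block1 nu : is_part k k nu -> ev nu 1 = k -> ev nu k = 1 ->
    nu = lam \/ nu = tau k lam -> has_square_block k k lam nu.
  move=> nu_part nu_1 nu_k nu_eq; exists 1; split; try lia.
  - by rewrite addKn nu_1 nu_k; lia.
  - by rewrite /= mkseq_ev.
case/and3P: lam_sq => _ /eqP lam_1 /eqP lam_k.
have [size_lam _ _] := proj1 (is_partP _ _ _) lam_part.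
case=> ->; first by apply: block1; rewrite ?lam_1 ?lam_k //; left.
apply: block1; first exact: is_part_tau.
- rewrite (ev_tau k size_lam); last lia.
  by rewrite subn1 /= lam_k; lia.
- rewrite (ev_tau k size_lam); last lia.
  by rewrite subSnn lam_1; lia.
- by right.
Qed.

Lemma PsetS_iff d mu :
  (forall nu, is_part (k + d) (k + d) nu ->
     Pset k lam d nu <-> has_square_block k (k + d) lam nu) ->
  is_part (k + d).+1 (k + d).+1 mu ->
  Pset k lam d.+1 mu <-> has_square_block k (k + d).+1 lam mu.
Proof.
move=> IH mu_part /=; rewrite addnS.
have le_k : k <= k + d by lia.
have ext nu : is_part (k + d).+1 (k + d).+1 nu -> Pset k lam d (take (k + d) nu) ->
    has_square_block k (k + d).+1 lam nu.
  move=> nu_part /[dup] /(Pset_is_part lam_part) take_part /IH-/(_ take_part) [b].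
  by exists b; apply: square_block_extend.
have trunc nu : is_part (k + d).+1 (k + d).+1 nu -> ev nu 1 <= k + d ->
    has_square_block k (k + d).+1 lam nu ->
    is_part (k + d).+1 (k + d).+1 nu /\ Pset k lam d (take (k + d) nu).
  move=> nu_part first_le [b block]; split => //.
  apply/IH; first exact: is_part_take.
  by exists b; apply: square_block_take.
split.
- case=> [[nu_part Ht] | [nu [[nu_part Ht] ->]]]; first exact: ext.
  by apply: has_square_block_tau (ext _ nu_part Ht) => //; lia.
- move=> sq_mu; have [size_mu _ bounded_mu] := proj1 (is_partP _ _ _) mu_part.
  have [first_le | first_eq] : ev mu 1 <= k + d \/ ev mu 1 = (k + d).+1.
    by have := bounded_mu 1; lia.
  + by left; apply: trunc.
  + right; exists (tau (k + d).+1 mu); split; last by rewrite (tauK mu_part).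
    have [b block] := sq_mu.
    have := square_block_last_gt1 le_k first_eq block => last_gt1.
    apply: trunc; first exact: is_part_tau.
    * rewrite (ev_tau _ size_mu); last lia.
      by rewrite subn1 /=; lia.
    * by apply: has_square_block_tau => //; lia.
Qed.

Lemma Pset_iff_has_square_block d mu : is_part (k + d) (k + d) mu ->
  Pset k lam d mu <-> has_square_block k (k + d) lam mu.
Proof.
elim: d mu => [|d IH] mu mu_part.
  by rewrite addn0 in mu_part *; apply: Pset0_iff.
by rewrite addnS in mu_part *; apply: PsetS_iff.
Qed.

End SquareBlock.

Theorem theorem3p1 (k ell : nat) (lam mu : seq nat) :
  0 < k -> k <= ell -> P_sq k lam -> is_part ell ell mu ->
  (Pell k lam ell mu <->
   exists b : nat,
     [/\ 1 <= b <= ell - k + 1,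
         ev mu b = b + k - 1 /\ ev mu (b + k - 1) = b,
         (forall i, 1 <= i < b -> ev mu (ev mu i) > i),
         (forall i, b + k - 1 < i <= ell -> ev mu (ev mu i) < i) &
         (let lt := mkseq (fun j => ev mu (b + j) - b + 1) k in
          lt = lam \/ lt = tau k lam)]).
Proof.
move=> k_gt0 le_k_ell lam_sq mu_part.
have := @Pset_iff_has_square_block k lam k_gt0 lam_sq (ell - k) mu.
rewrite subnKC // => /(_ mu_part) Pset_iff.
rewrite /Pell -/(has_square_block k ell lam mu) -Pset_iff.
by split=> [[]|].
Qed.
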